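(* Let $S\subset[0,\infty)$ with $0\in S$, and let $\{f_n\colon S\to[0,\infty)\}$ be a sequence of decreasing right-continuous functions converging uniformly on $S$ to a function $f$. If $DP(\overline{f_n})\subset S$ for all $n$, then $f$ is decreasing and right-continuous and $DP(\overline{f})\subset S$.
   Context: For $S\subset[0,\infty)$ with $0\in S$, a function on $S$ is right-continuous if it is right-continuous for the relative topology of $S$. For a right-continuous decreasing $f\colon S\to[0,\infty)$ and $x\in\overline{S}$ (closure in $\mathbb{R}$), set $f(x+):=\sup\{f(y)\mid y\in(x,\infty)\cap S\}$ whenever $(x,\infty)\cap S\neq\emptyset$, and $f(x-):=\inf\{f(y)\mid y\in[0,x)\cap S\}$ if $x\neq0$, $f(0-):=f(0)$. Define $\overline{f}\colon\overline{S}\to[0,\infty)$ by $\overline{f}(x)=f(x)$ if $x\in S$, $\overline{f}(x)=f(x+)$ if $x\in\overline{S}\setminus S$ is a right accumulation point of $S$, and $\overline{f}(x)=f(x-)$ otherwise. With $\overline{f}(x-)$ defined by the same formula applied to $\overline{f}$ on $\overline{S}$, the set of left-jump points is $DP(\overline{f}):=\{x\in\overline{S}\setminus\{0\}\mid\overline{f}(x-)>\overline{f}(x)\}$. *)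

From HB Require Import structures.
From mathcomp Require Import all_boot all_order all_algebra.
From mathcomp Require Import all_classical all_reals topology normedtype.
Set Implicit Arguments. Unset Strict Implicit. Unset Printing Implicit Defensive.
Import Order.TTheory GRing.Theory Num.Theory numFieldNormedType.Exports.
Local Open Scope classical_set_scope.
Local Open Scope ring_scope.

Section Defs.
Variable R : realType.
Implicit Types (S : set R) (f : R -> R).

Definition nonneg_on S f := forall x, S x -> 0 <= f x.

Definition decreasing_on S f := forall x y, S x -> S y -> x <= y -> f y <= f x.

Definition right_continuous_on S f :=
  forall x, S x -> forall e : R, 0 < e ->
    exists2 d : R, 0 < d & forall y, S y -> x <= y -> y < x + d -> `|f y - f x| < e.

Definition rc_decr S f := [/\ nonneg_on S f, decreasing_on S f & right_continuous_on S f].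

Definition rlim S f x : R := sup [set f y | y in [set y | S y /\ x < y]].

Definition llim S f x : R :=
  if x == 0 then f 0 else inf [set f y | y in [set y | S y /\ 0 <= y /\ y < x]].

Definition right_acc S x := forall d : R, 0 < d -> exists y, S y /\ x < y /\ y < x + d.

Definition fbar S f x : R :=
  if `[< S x >] then f x
  else if `[< right_acc S x >] then rlim S f x
  else llim S f x.

(* DP(\overline{f}) : left-jump points of \overline{f} on \overline{S} *)
Definition DP S f : set R :=
  [set x : R | closure (S : set R) x /\ x != 0 /\ llim (closure S) (fbar S f) x > fbar S f x].

End Defs.

From mathcomp Require Import all_boot all_order all_algebra.
From mathcomp Require Import all_classical all_reals topology normedtype.
From mathcomp Require Import lra.
Set Implicit Arguments. Unset Strict Implicit. Unset Printing Implicit Defensive.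
Import Order.TTheory GRing.Theory Num.Theory numFieldNormedType.Exports.
Local Open Scope classical_set_scope.
Local Open Scope ring_scope.

(* Taking a supremum or an infimum is 1-Lipschitz for the uniform distance,
   hence so are g |-> \overline{g}(x) and g |-> \overline{g}(x-), and with them
   the jump \overline{g}(x-) - \overline{g}(x).  If \overline{f} jumps at x by
   more than 2e, every f_n with |f_n - f| <= e on S still jumps at x, so x lies
   in DP(\overline{f_n}), which is contained in S.  Monotonicity, positivity and
   right continuity pass to uniform limits by the usual e/3 arguments. *)

Section SupInfDistance.
Variables (R : realType) (T : Type) (A : set T) (a b : T -> R) (e : R).
Hypothesis dist_ab : forall t, A t -> `|a t - b t| <= e.

Lemma has_sup_image_close : has_sup (a @` A) -> has_sup (b @` A).
Proof.
move=> [[_ [t At _]] [M ubM]]; split; first by exists (b t), t.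
exists (M + e) => _ [s As <-].
have := ubM _ (ex_intro2 _ _ s As erefl); have := dist_ab As.
rewrite ler_distl => /andP[]; lra.
Qed.

Lemma sup_image_leD : has_sup (b @` A) -> sup (a @` A) <= sup (b @` A) + e.
Proof.
move=> [[_ [t At _]] ubb]; apply: ge_sup; first by exists (a t), t.
move=> _ [s As <-].
have := ub_le_sup ubb (ex_intro2 _ _ s As erefl); have := dist_ab As.
rewrite ler_distl => /andP[]; lra.
Qed.

End SupInfDistance.

(* No boundedness is needed: [sup] is 0 on sets without a supremum, and
   [a @` A] has one exactly when [b @` A] has. *)
Lemma sup_image_dist (R : realType) (T : Type) (A : set T) (a b : T -> R) (e : R) :
  0 <= e -> (forall t, A t -> `|a t - b t| <= e) ->
  `|sup (a @` A) - sup (b @` A)| <= e.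
Proof.
move=> e_ge0 dist_ab.
have dist_ba t : A t -> `|b t - a t| <= e by rewrite distrC; apply: dist_ab.
have [supa|nsupa] := pselect (has_sup (a @` A)).
  have supb := has_sup_image_close dist_ab supa.
  have := sup_image_leD dist_ab supb; have := sup_image_leD dist_ba supa.
  rewrite ler_distl; lra.
have nsupb : ~ has_sup (b @` A) by move/(has_sup_image_close dist_ba).
by rewrite !sup_out // subrr normr0.
Qed.

Lemma inf_image_dist (R : realType) (T : Type) (A : set T) (a b : T -> R) (e : R) :
  0 <= e -> (forall t, A t -> `|a t - b t| <= e) ->
  `|inf (a @` A) - inf (b @` A)| <= e.
Proof.
move=> e_ge0 dist_ab; rewrite /inf !image_comp opprK addrC distrC.
by apply: sup_image_dist => // t At /=; rewrite -opprD normrN dist_ab.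
Qed.

Section JumpDistance.
Variables (R : realType) (S : set R) (g h : R -> R) (e : R).
Hypotheses (S0 : S 0) (dist_gh : forall x, S x -> `|g x - h x| <= e).

Let e_ge0 : 0 <= e. Proof. exact: le_trans (normr_ge0 _) (dist_gh S0). Qed.

Lemma llim_dist x : `|llim S g x - llim S h x| <= e.
Proof.
rewrite /llim; case: ifPn => _; first exact: dist_gh.
by apply: inf_image_dist e_ge0 _ => t [St _]; apply: dist_gh.
Qed.

Lemma fbar_dist x : `|fbar S g x - fbar S h x| <= e.
Proof.
rewrite /fbar; case: ifPn => [/asboolP|_]; first exact: dist_gh.
case: ifPn => _; last exact: llim_dist.
by apply: sup_image_dist e_ge0 _ => t [St _]; apply: dist_gh.
Qed.

Lemma llim_fbar_dist x :
  `|llim (closure S) (fbar S g) x - llim (closure S) (fbar S h) x| <= e.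
Proof.
rewrite /llim; case: ifPn => _; first exact: fbar_dist.
by apply: inf_image_dist e_ge0 _ => t _; apply: fbar_dist.
Qed.

Lemma DP_close x :
  DP S h x -> 2 * e < llim (closure S) (fbar S h) x - fbar S h x -> DP S g x.
Proof.
move=> [clx [x0 _]] jump; split => //; split => //.
have := llim_fbar_dist x; have := fbar_dist x.
rewrite !ler_distl => /andP[? ?] /andP[? ?]; lra.
Qed.

End JumpDistance.

Definition uniform_limit_on {R : realType} (S : set R) (F : nat -> R -> R)
    (f : R -> R) :=
  forall e : R, 0 < e -> exists N : nat, forall n, (N <= n)%N ->
    forall x, S x -> `|F n x - f x| < e.

Section UniformLimit.
Variables (R : realType) (S : set R) (F : nat -> R -> R) (f : R -> R).
Hypothesis Ff : uniform_limit_on S F f.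

Lemma uniform_limit_close e : 0 < e ->
  exists n, forall x, S x -> f x - e < F n x < f x + e.
Proof.
move=> /Ff[N FN]; exists N => x Sx.
by rewrite -ltr_distlC distrC; apply: FN.
Qed.

Lemma nonneg_on_uniform_limit : (forall n, nonneg_on S (F n)) -> nonneg_on S f.
Proof.
move=> Fnn x Sx; apply/ler_addgt0Pr => e /uniform_limit_close[n Fn].
have := Fnn n x Sx; have /andP[? ?] := Fn x Sx; lra.
Qed.

Lemma decreasing_on_uniform_limit :
  (forall n, decreasing_on S (F n)) -> decreasing_on S f.
Proof.
move=> Fdec x y Sx Sy xy; apply/ler_addgt0Pr => e e0.
have [n Fn] := uniform_limit_close (divr_gt0 e0 (ltr0n _ 2)).
have := Fdec n x y Sx Sy xy; have /andP[? ?] := Fn x Sx; have /andP[? ?] := Fn y Sy.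
lra.
Qed.

Lemma right_continuous_on_uniform_limit :
  (forall n, right_continuous_on S (F n)) -> right_continuous_on S f.
Proof.
move=> Frc x Sx e e0.
have [n Fn] := uniform_limit_close (divr_gt0 e0 (ltr0n _ 3)).
have [d d0 Fnd] := Frc n x Sx (e / 3) (divr_gt0 e0 (ltr0n _ 3)).
exists d => // y Sy xy yd.
have := Fnd y Sy xy yd; have /andP[? ?] := Fn x Sx; have /andP[? ?] := Fn y Sy.
rewrite !ltr_distl => /andP[? ?]; apply/andP; split; lra.
Qed.

Lemma DP_uniform_limit : S 0 -> (forall n, DP S (F n) `<=` S) -> DP S f `<=` S.
Proof.
move=> S0 FDP x DPx; have [_ [_ jump]] := DPx.
have [e e0 e_small] : exists2 e : R, 0 < e &
    2 * e < llim (closure S) (fbar S f) x - fbar S f x.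
  exists ((llim (closure S) (fbar S f) x - fbar S f x) / 3); lra.
have [N FN] := Ff e0.
have dist_Nf z : S z -> `|F N z - f z| <= e by move=> Sz; apply/ltW/FN.
exact: FDP N _ (DP_close S0 dist_Nf DPx e_small).
Qed.

End UniformLimit.

Theorem lemma2p7 (R : realType) (S : set R) (F : nat -> R -> R) (f : R -> R) :
  S `<=` [set x | 0 <= x] -> S 0 ->
  (forall n, rc_decr S (F n)) ->
  (forall e : R, 0 < e -> exists N : nat, forall n, (N <= n)%N ->
     forall x, S x -> `|F n x - f x| < e) ->
  (forall n, DP S (F n) `<=` S) ->
  rc_decr S f /\ DP S f `<=` S.
Proof.
move=> _ S0 Frc Ff FDP; split; last exact: DP_uniform_limit Ff S0 FDP.
split.
- by apply: (nonneg_on_uniform_limit Ff) => n; case: (Frc n).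
- by apply: (decreasing_on_uniform_limit Ff) => n; case: (Frc n).
- by apply: (right_continuous_on_uniform_limit Ff) => n; case: (Frc n).
Qed.
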